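(* Let $\mathbb{F}_q$ be a finite field and let $z_1,\dots,z_n$ be indeterminates. For $k=1,\dots,n$ let $$f_k=\prod_{(\alpha_1,\dots,\alpha_{k-1})\in\mathbb{F}_q^{k-1}}\bigl(z_k+\alpha_{k-1}z_{k-1}+\cdots+\alpha_1z_1\bigr)\in\mathbb{F}_q[z_1,\dots,z_n]$$ (so $f_1=z_1$). Then for each $k=1,\dots,n$, the differential $df_k=\sum_{l=1}^n\frac{\partial f_k}{\partial z_l}dz_l$ is divisible by $\prod_{i<k}f_i^{\,q-2}$, i.e. every partial derivative $\frac{\partial f_k}{\partial z_l}$ is divisible by $\prod_{i<k}f_i^{\,q-2}$.
   Context: The $f_k$ are the basic invariants of the group of lower triangular unipotent matrices $\mathrm{U}_n(\mathbb{F}_q)$ acting on $V=\mathbb{F}_q^n$ with $z_1,\dots,z_n$ the dual basis of $V^*$. *)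

From HB Require Import structures.
From mathcomp Require Import all_boot all_order all_algebra all_field.
From mathcomp Require Import mpoly.
Set Implicit Arguments. Unset Strict Implicit. Unset Printing Implicit Defensive.
Import GRing.Theory.
Local Open Scope ring_scope.

Definition mdvd (F : finFieldType) (n : nat) (d p : {mpoly F[n]}) : Prop :=
  exists r : {mpoly F[n]}, p = r * d.

(* f_k for the 0-based index k : 'I_n (the paper's f_{k+1}):
   product over alpha in F^k of  z_k + sum_{j<k} alpha_j z_j. *)
Definition fk (F : finFieldType) (n : nat) (k : 'I_n) : {mpoly F[n]} :=
  \prod_(alpha : {ffun 'I_k -> F})
     ('X_k + \sum_(j < k) alpha j *: 'X_(widen_ord (ltnW (ltn_ord k)) j)).
Arguments fk F [n] k.

From HB Require Import structures.
From mathcomp Require Import all_boot all_order all_algebra all_field.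
From mathcomp Require Import fingroup cyclic abelian.
From mathcomp Require Import mpoly.
Set Implicit Arguments. Unset Strict Implicit. Unset Printing Implicit Defensive.
Import GRing.Theory.
Local Open Scope ring_scope.

(* Let P_k(u) be the product of u + w over the vectors w of the F_q-span of
   z_1, ..., z_k, so that f_{k+1} = P_k(z_{k+1}).  P_k is F_q-linear in u, and
   grouping the factors of P_{k+1}(u) by the coefficient of z_{k+1} gives
   P_{k+1}(u) = P_k(u)^q - f_{k+1}^(q-1) P_k(u).  Since the q-th power has zero
   derivative, dP_{k+1}(u) = -(q-1) f_{k+1}^(q-2) df_{k+1} P_k(u)
   - f_{k+1}^(q-1) dP_k(u), and induction on k shows that the product of the
   f_i^(q-2), i <= k, divides dP_k(z_m) for every m. *)

Lemma size_monicB (R : nzRingType) (p r : {poly R}) :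
  p \is monic -> r \is monic -> size p = size r -> (size (p - r)%R < size p)%N.
Proof.
move=> mp mr spr; have [->|nz_pr] := eqVneq (p - r) 0.
  by rewrite size_poly0 size_poly_gt0 monic_neq0.
have le_pr : (size (p - r)%R <= size p)%N.
  by rewrite (leq_trans (size_polyD _ _)) // size_polyN -spr maxnn.
rewrite ltn_neqAle le_pr andbT; apply: contra nz_pr => /eqP s_pr.
rewrite -lead_coef_eq0 lead_coefE s_pr coefB -lead_coefE spr -lead_coefE.
by rewrite (monicP mp) (monicP mr) subrr.
Qed.

Section FiniteFieldAlgebra.
Variables (F : finFieldType) (R : comNzRingType) (phi : {rmorphism F -> R}).
Local Notation q := #|F|.

Lemma pnat_pchar_card : ([pchar F]).-nat q.
Proof.
have [p _ pF] := finPcharP F.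
rewrite (eq_pnat _ (pcharf_eq pF)) -cardsT.
exact/abelem_pgroup/fin_ring_pchar_abelem.
Qed.

Lemma natr_card : q%:R = 0 :> R.
Proof.
(* [set: F] is the additive group of F, of order q. *)
have := @expg_cardG F [set: F] 1%R (in_setT _).
by rewrite cardsT => /(congr1 phi); rewrite rmorph_nat rmorph0.
Qed.

Lemma exprD_card (x y : R) : (x + y) ^+ q = x ^+ q + y ^+ q.
Proof. by rewrite exprDn_pchar // (eq_pnat _ (fmorph_pchar phi)) pnat_pchar_card. Qed.

Lemma fmorphX_card (c : F) : phi c ^+ q = phi c.
Proof. by rewrite -rmorphXn expf_card. Qed.

Lemma expr_card_subM_linear (a x y : R) (c : F) :
  (x + phi c * y) ^+ q - a * (x + phi c * y)
    = (x ^+ q - a * x) + phi c * (y ^+ q - a * y).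
Proof.
by rewrite exprD_card exprMn fmorphX_card mulrDr mulrCA mulrBr opprD addrACA.
Qed.

End FiniteFieldAlgebra.

Section AdditiveProduct.
Variables (F : finFieldType) (R : idomainType) (phi : {rmorphism F -> R}).
Local Notation q := #|F|.

Lemma prod_add_fmorphM (A B : R) :
  \prod_(c : F) (A + phi c * B) = A ^+ q - B ^+ q.-1 * A.
Proof.
have q_gt1 : (1 < q)%N := finNzRing_gt1 F.
have [->|nzB] := eqVneq B 0.
  under eq_bigr do rewrite mulr0 addr0.
  by rewrite prodr_const expr0n -subn1 subn_eq0 leqNgt q_gt1 mul0r subr0.
(* Both sides are values at A of monic polynomials of degree q vanishing at
   the q distinct points phi c * B. *)
pose rs := [seq phi c * B | c <- enum F].
pose p1 : {poly R} := 'X^q - (B ^+ q.-1)%:P * 'X.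
pose p2 : {poly R} := \prod_(r <- rs) ('X - r%:P).
have p1E x : p1.[x] = x ^+ q - B ^+ q.-1 * x.
  by rewrite hornerD hornerN hornerXn hornerMX hornerC.
have size_rs : size rs = q by rewrite size_map -cardE.
have size_lower : (size (- ((B ^+ q.-1)%:P * 'X)) < size ('X^q : {poly R}))%N.
  rewrite size_polyN size_polyXn mul_polyC.
  by rewrite (leq_ltn_trans (size_scale_leq _ _)) ?size_polyX.
have size_p1 : size p1 = q.+1 by rewrite size_polyDl // size_polyXn.
have p1_monic : p1 \is monic by rewrite monicE lead_coefDl // lead_coefXn.
have p1_p2 : p1 = p2.
  apply/eqP; rewrite -subr_eq0; apply/eqP/(roots_geq_poly_eq0 (rs := rs)).
  - apply/allP => _ /mapP[c _ ->]; rewrite rootE hornerD hornerN p1E.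
    have /rootP -> : root p2 (phi c * B).
      by rewrite root_prod_XsubC; apply: map_f; rewrite mem_enum.
    rewrite subr0 exprMn (fmorphX_card phi) mulrCA -exprSr.
    by rewrite prednK ?subrr // ltnW.
  - by rewrite map_inj_uniq ?enum_uniq // => c d /(mulIf nzB)/fmorph_inj.
  - rewrite size_rs -ltnS -size_p1 size_monicB ?monic_prod_XsubC //.
    by rewrite size_prod_XsubC size_rs.
rewrite -p1E p1_p2 horner_prod big_map big_enum (reindex_inj oppr_inj) /=.
by apply: eq_bigr => c _; rewrite hornerXsubC rmorphN mulNr.
Qed.

End AdditiveProduct.

Section SubspacePolynomials.
Variables (F : finFieldType) (n : nat).
Local Notation R := {mpoly F[n]}.
Local Notation q := #|F|.
Local Notation alg := (in_alg R : {rmorphism F -> R}).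

(* Indexing the variables by nat, with junk value 0 for j >= n, avoids the
   casts between ordinals that fk carries. *)
Definition z (j : nat) : R := if insub j is Some i then 'X_i else 0.

Lemma zE (i : 'I_n) : z i = 'X_i.
Proof. by rewrite /z valK. Qed.

Definition subspace_poly (k : nat) (u : R) : R :=
  \prod_(a : {ffun 'I_k -> F}) (u + \sum_(j < k) a j *: z j).

Lemma fk_subspace_poly (k : 'I_n) : fk F k = subspace_poly k (z k).
Proof.
rewrite /fk /subspace_poly zE; apply: eq_bigr => a _; congr (_ + _).
by apply: eq_bigr => j _; rewrite -zE.
Qed.

Lemma subspace_poly0 u : subspace_poly 0 u = u.
Proof.
rewrite /subspace_poly; under eq_bigr do rewrite big_ord0 addr0.
by rewrite prodr_const card_ffun card_ord expn0 expr1.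
Qed.

Lemma subspace_polyS_prod k u :
  subspace_poly k.+1 u = \prod_(c : F) subspace_poly k (u + c *: z k).
Proof.
rewrite /subspace_poly pair_big /=.
pose h (x : F * {ffun 'I_k -> F}) : {ffun 'I_k.+1 -> F} :=
  [ffun i => if unlift ord_max i is Some j then x.2 j else x.1].
pose g (a : {ffun 'I_k.+1 -> F}) : F * {ffun 'I_k -> F} :=
  (a ord_max, [ffun j => a (lift ord_max j)]).
have hK : cancel h g.
  case=> c b; rewrite /g /h /= !ffunE unlift_none; congr (_, _).
  by apply/ffunP => j; rewrite !ffunE liftK.
have gK : cancel g h.
  move=> a; apply/ffunP => i; rewrite /g /h ffunE.
  by case: unliftP => [j ->|->] /=; rewrite ?ffunE.
rewrite (reindex h); last by exists g => x _; [apply: hK | apply: gK].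
apply: eq_bigr => [[c b]] _; rewrite big_ord_recr /= /h !ffunE unlift_none.
rewrite [X in u + X]addrC addrA /=; congr (_ + _).
apply: eq_bigr => j _; rewrite ffunE.
have -> : widen_ord (leqnSn k) j = lift ord_max j.
  by apply: val_inj; rewrite /= /bump leqNgt ltn_ord.
by rewrite liftK.
Qed.

Lemma subspace_polyS_of_linear k u :
  (forall w (c : F), subspace_poly k (w + c *: z k)
     = subspace_poly k w + c *: subspace_poly k (z k)) ->
  subspace_poly k.+1 u = subspace_poly k u ^+ q
    - subspace_poly k (z k) ^+ q.-1 * subspace_poly k u.
Proof.
move=> linPk; rewrite subspace_polyS_prod.
under eq_bigr do rewrite linPk -mulr_algl.
exact: prod_add_fmorphM alg _ _.
Qed.

Lemma subspace_poly_linear k u v (c : F) :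
  subspace_poly k (u + c *: v) = subspace_poly k u + c *: subspace_poly k v.
Proof.
elim: k u v c => [|k IH] u v c; first by rewrite !subspace_poly0.
rewrite !subspace_polyS_of_linear // IH.
rewrite -[c *: subspace_poly k v]mulr_algl -[c *: (_ - _)]mulr_algl.
exact: expr_card_subM_linear alg _ _ _ _.
Qed.

Lemma subspace_polyS k u : subspace_poly k.+1 u = subspace_poly k u ^+ q
  - subspace_poly k (z k) ^+ q.-1 * subspace_poly k u.
Proof. by apply: subspace_polyS_of_linear => w c; apply: subspace_poly_linear. Qed.

Lemma mderiv_exp l (p : R) m : mderiv l (p ^+ m) = mderiv l p * p ^+ m.-1 *+ m.
Proof.
case: m => [|m]; first by rewrite expr0 mderivC mulr0n.
elim: m => [|m IH]; first by rewrite expr0 mulr1.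
by rewrite exprS mderivM IH /= mulrnAr mulrCA -exprS [in RHS]mulrS.
Qed.

Lemma mderiv_exp_card l (p : R) : mderiv l (p ^+ q) = 0.
Proof. by rewrite mderiv_exp -mulr_natr (natr_card alg) mulr0. Qed.

Lemma mdvdD (d p r : R) : mdvd d p -> mdvd d r -> mdvd d (p + r).
Proof. by move=> [a ->] [b ->]; exists (a + b); rewrite mulrDl. Qed.

Lemma mdvdN (d p : R) : mdvd d p -> mdvd d (- p).
Proof. by move=> [a ->]; exists (- a); rewrite mulNr. Qed.

Lemma mdvdMr (d p a : R) : mdvd d p -> mdvd d (p * a).
Proof. by move=> [b ->]; exists (b * a); rewrite mulrAC. Qed.

Lemma mdvdMn (d p : R) m : mdvd d p -> mdvd d (p *+ m).
Proof. by move=> [b ->]; exists (b *+ m); rewrite mulrnAl. Qed.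

Lemma mdvd_mul2r (d p a : R) : mdvd d p -> mdvd (d * a) (p * a).
Proof. by move=> [b ->]; exists b; rewrite mulrA. Qed.

Definition lower_prod k : R := \prod_(i < k) subspace_poly i (z i) ^+ (q - 2).

Lemma mdvd_mderiv_subspace_poly k m l :
  mdvd (lower_prod k) (mderiv l (subspace_poly k (z m))).
Proof.
have q_pred : q.-1 = (q - 2).+1 by rewrite -subn1 -subnSK ?finNzRing_gt1.
elim: k m => [|k IH] m.
  by exists (mderiv l (subspace_poly 0 (z m))); rewrite /lower_prod big_ord0 mulr1.
rewrite subspace_polyS mderivB mderiv_exp_card sub0r mderivM mderiv_exp.
rewrite /lower_prod big_ord_recr /= -/(lower_prod k) q_pred /=.
apply/mdvdN/mdvdD; first exact/mdvdMr/mdvdMn/mdvd_mul2r.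
rewrite exprSr mulrAC [_ * mderiv _ _]mulrC; exact/mdvdMr/mdvd_mul2r.
Qed.

End SubspacePolynomials.

Theorem lemma6p7 (F : finFieldType) (n : nat) (k l : 'I_n) :
  mdvd (\prod_(i < n | (i < k)%N) fk F i ^+ (#|F| - 2)%N) (mderiv l (fk F k)).
Proof.
have -> : \prod_(i < n | (i < k)%N) fk F i ^+ (#|F| - 2)%N = @lower_prod F n k.
  rewrite /lower_prod (big_ord_widen_cond _ xpredT
    (fun i => @subspace_poly F n i (@z F n i) ^+ (#|F| - 2)) (ltnW (ltn_ord k))).
  by apply: eq_bigr => i _; rewrite fk_subspace_poly.
rewrite fk_subspace_poly; exact: mdvd_mderiv_subspace_poly.
Qed.
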